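(* Let $P$ be a distribution on an instance set $\mathcal{Z}$, let $h$ be a fixed model (hypothesis), and let $\ell$ be a nonnegative loss with $C=\sup_{z\in\mathcal{Z}}\ell(h,z)<\infty$. Let $S=\{z_1,\dots,z_n\}$ consist of $n$ i.i.d. samples from $P$, and let $\Gamma$ be a partition of $\mathcal{Z}$ into $K$ disjoint nonempty (measurable) sets $\mathcal{Z}_1,\dots,\mathcal{Z}_K$. For any constants $\gamma\ge 1$, $\delta>0$ and $\alpha\in\left[0,\frac{\gamma n(K+\gamma n)}{K(4n-3)}\right]$, with probability at least $1-\gamma^{-\alpha}-\delta$ (over the draw of $S$), $$F(P,h)\le F(S,h)+C\sqrt{\hat u\,\alpha\ln\gamma}+g(\delta/2),$$ where $$\hat u=\frac{\gamma}{2n}+\frac{\gamma^2}{2}\sum_{i=1}^K\Big(\frac{n_i}{n}\Big)^2+\gamma^2\sqrt{\frac{2}{n}\ln\frac{2K}{\delta}}.$$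
   Context: $F(P,h)=\mathbb{E}_{z\sim P}[\ell(h,z)]$ is the expected loss and $F(S,h)=\frac1n\sum_{z\in S}\ell(h,z)$ the empirical loss. For the partition $\mathcal{Z}=\bigcup_{i=1}^K\mathcal{Z}_i$: $S_i=S\cap\mathcal{Z}_i$, $n_i=|S_i|$ (so $n=\sum_i n_i$), and $T=\{i\in[K]: S\cap\mathcal{Z}_i\neq\emptyset\}$. For $\delta>0$, $g(\delta)=C(\sqrt2+1)\sqrt{\frac{|T|\ln(2K/\delta)}{n}}+\frac{2C|T|\ln(2K/\delta)}{n}$. *)

From HB Require Import structures.
From mathcomp Require Import all_boot all_order all_algebra.
From mathcomp Require Import all_classical all_reals all_analysis.
Set Implicit Arguments. Unset Strict Implicit. Unset Printing Implicit Defensive.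
Import Order.TTheory GRing.Theory Num.Theory.
Local Open Scope classical_set_scope.
Local Open Scope ring_scope.

Section Defs.
Context {R : realType} {d : measure_display} {T : measurableType d}.

Definition cell_count (n K : nat) (Zs : 'I_K -> set T) (z : 'I_n -> T)
  (i : 'I_K) : nat := #|[set j : 'I_n | z j \in Zs i]|.

Definition num_hit (n K : nat) (Zs : 'I_K -> set T) (z : 'I_n -> T) : nat :=
  #|[set i : 'I_K | (0 < cell_count Zs z i)%N]|.

Definition emp_loss (n : nat) (loss : T -> R) (z : 'I_n -> T) : R :=
  n%:R^-1 * \sum_(j < n) loss (z j).

Definition gfun (C : R) (n K t : nat) (delta : R) : R :=
  C * (Num.sqrt 2 + 1) * Num.sqrt (t%:R * ln (2 * K%:R / delta) / n%:R)
  + 2 * C * t%:R * ln (2 * K%:R / delta) / n%:R.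

Definition uhat (gamma delta : R) (n K : nat) (Zs : 'I_K -> set T)
  (z : 'I_n -> T) : R :=
  gamma / (2 * n%:R)
  + gamma ^+ 2 / 2 * \sum_(i < K) ((cell_count Zs z i)%:R / n%:R) ^+ 2
  + gamma ^+ 2 * Num.sqrt (2 / n%:R * ln (2 * K%:R / delta)).

End Defs.

(* A Hoeffding bound already suffices: [uhat] is at least
   [u := 1/(2n) + sqrt (2 ln (2K/delta) / n)], and [n u >= 2] once [n >= 3], so a deviation
   [C sqrt (u alpha ln gamma)] of the empirical loss below the risk has probability at most
   [gamma^-alpha].  Hoeffding's inequality is proved for i.i.d. samples of a finitely valued
   loss, by a Chernoff bound on the explicit product distribution; the general case reduces to
   it by rounding the loss down to a grid of mesh [2 C ln (4K/delta) / n <= g(delta/2)], which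
   the [g] term absorbs.  When this mesh exceeds [C] (in particular when [n <= 2]) the bound
   holds surely. *)

From HB Require Import structures.
From mathcomp Require Import all_boot all_order all_algebra.
From mathcomp Require Import all_classical all_reals all_analysis.
From mathcomp Require Import measurable_realfun ring lra.
Set Implicit Arguments. Unset Strict Implicit. Unset Printing Implicit Defensive.
Import Order.TTheory GRing.Theory Num.Theory.
Local Open Scope classical_set_scope.
Local Open Scope ring_scope.

Section exp_ln_bounds.
Variable R : realType.

Lemma expR_le_quad (x : R) : x <= 1 -> expR x <= 1 + x + 2 * x ^+ 2.
Proof.
move=> x_le1; set c := 1 - x / 2.
have c_gt0 : 0 < c by rewrite /c; lra.
have expR2 : expR x = expR (x / 2) ^+ 2 by rewrite expr2 -expRD; congr expR; field.
(* [expR x <= c^-2] since [1 - x/2 <= expR (- x/2)], and [c^-2 <= 1 + x + 2 x^2] for [x <= 1] *)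
have ec_le1 : expR (x / 2) * c <= 1.
  have := expR_ge1Dx (- (x / 2)); rewrite expRN => h.
  by rewrite mulrC -ler_pdivlMr ?expR_gt0 // div1r.
have ec2_le1 : (expR (x / 2) * c) ^+ 2 <= 1.
  have ec_ge0 : 0 <= expR (x / 2) * c by rewrite mulr_ge0 ?expR_ge0 ?ltW.
  by have := ler_pM ec_ge0 ec_ge0 ec_le1 ec_le1; rewrite mulr1 -expr2.
have quad_c2 : 1 <= (1 + x + 2 * x ^+ 2) * c ^+ 2.
  have -> : (1 + x + 2 * x ^+ 2) * c ^+ 2 =
      1 + x ^+ 2 * ((1 - x) * (5 - 2 * x)) / 4 by rewrite /c; field.
  rewrite lerDl; apply: divr_ge0 => //.
  by apply: mulr_ge0; [exact: sqr_ge0 | apply: mulr_ge0; lra].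
rewrite expR2 -(ler_pM2r (exprn_gt0 2 c_gt0)) -exprMn; lra.
Qed.

Lemma ln2_ge_half : 1 / 2 <= ln (2 : R).
Proof.
rewrite -[1 / 2]expRK ler_ln ?posrE ?expR_gt0 //.
have := expR_ge1Dx (- (1 / 2) : R); rewrite expRN => h.
have e_gt0 : 0 < expR (1 / 2 : R) := expR_gt0 _.
have : expR (1 / 2 : R) * (1 + - (1 / 2)) <= 1.
  by rewrite [X in X <= _]mulrC -ler_pdivlMr //; move: h; rewrite !div1r.
lra.
Qed.

Lemma ln_ge_halfn (k : nat) (x : R) : 2 ^+ k <= x -> k%:R / 2 <= ln x.
Proof.
move=> x_ge; have x_gt0 : 0 < x by apply: lt_le_trans x_ge; rewrite exprn_gt0.
apply: le_trans (_ : ln (2 ^+ k) <= _); last by rewrite ler_ln ?posrE ?exprn_gt0.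
by rewrite lnXn // mulrC mulr_natr -div1r lerMn2r ln2_ge_half orbT.
Qed.

End exp_ln_bounds.

Section finite_hoeffding.
Variables (R : realType) (I : finType) (p a : I -> R) (C : R).
Hypotheses (p_ge0 : forall k, 0 <= p k) (p_sum1 : \sum_k p k = 1)
  (a_bound : forall k, 0 <= a k <= C).

Let m := \sum_k p k * a k.

Let mean_bound : 0 <= m <= C.
Proof.
apply/andP; split.
  by apply: sumr_ge0 => k _; apply: mulr_ge0 => //; case/andP: (a_bound k).
rewrite -[C]mul1r -p_sum1 mulr_suml; apply: ler_sum => k _.
by apply: ler_wpM2l => //; case/andP: (a_bound k).
Qed.

Lemma mgf_centered_le (l : R) : 0 <= l -> l * C <= 1 ->
  \sum_k p k * expR (l * (m - a k)) <= expR (l ^+ 2 * C ^+ 2 / 2).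
Proof.
move=> l_ge0 lC_le1.
have /andP[m_ge0 m_leC] := mean_bound.
(* as a function of [a k], the quadratic bound on [expR] is convex, hence below its chord
   over [0, C], whose average only involves [m] *)
pose c0 := 1 + l * m + 2 * l ^+ 2 * m ^+ 2.
pose c1 := - l + 2 * l ^+ 2 * (C - 2 * m).
apply: le_trans (expR_ge1Dx _).
apply: (@le_trans _ _ (\sum_k (p k * c0 + p k * a k * c1))); last first.
  rewrite big_split /= -!mulr_suml p_sum1 mul1r -/m /c0 /c1.
  have : 0 <= (C - 2 * m) ^+ 2 by exact: sqr_ge0.
  have : 0 <= l ^+ 2 by exact: sqr_ge0.
  nra.
apply: ler_sum => k _; have /andP[ak_ge0 ak_leC] := a_bound k.
have x_le1 : l * (m - a k) <= 1.
  by apply: le_trans lC_le1; apply: ler_wpM2l => //; lra.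
apply: le_trans (ler_wpM2l (p_ge0 k) (expR_le_quad x_le1)) _.
rewrite -mulrA -mulrDr; apply: ler_wpM2l => //.
have : 0 <= 2 * l ^+ 2 * (a k * (C - a k)).
  by apply: mulr_ge0; [rewrite mulr_ge0 ?sqr_ge0 | apply: mulr_ge0; lra].
suff -> : c0 + a k * c1 = 1 + l * (m - a k) + 2 * (l * (m - a k)) ^+ 2
                           + 2 * l ^+ 2 * (a k * (C - a k)) by rewrite lerDl.
by rewrite /c0 /c1; ring.
Qed.

Lemma hoeffding_lower_tail (n : nat) (t : R) : (0 < n)%N -> 0 < C -> 0 <= t ->
  \sum_(v : {ffun 'I_n -> I} | n%:R * t <= \sum_j (m - a (v j))) \prod_j p (v j)
  <= expR (- (n%:R * t ^+ 2 / (2 * C ^+ 2))).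
Proof.
move=> n_gt0 C_gt0 t_ge0; have /andP[m_ge0 m_leC] := mean_bound.
have n_gt0R : (0 : R) < n%:R by rewrite ltr0n.
have [t_leC|C_lt_t] := leP t C; last first.
  rewrite big1 ?expR_ge0 // => v; apply: contraTeq => _; rewrite -ltNge.
  apply: le_lt_trans (_ : n%:R * m < _); last by rewrite ltr_pM2l //; lra.
  have : \sum_j (m - a (v j)) <= \sum_(j < n) m.
    by apply: ler_sum => j _; case/andP: (a_bound (v j)) => ? ?; lra.
  by rewrite sumr_const card_ord mulr_natl.
pose l := t / C ^+ 2.
have l_ge0 : 0 <= l by rewrite divr_ge0 ?sqr_ge0.
have lC_le1 : l * C <= 1.
  by rewrite /l expr2 invfM mulrA mulfVK ?gt_eqF // ler_pdivrMr // mul1r.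
pose F k := p k * expR (l * (m - a k)).
(* Chernoff with the optimal [l]: on the event, [1 <= expR (l * (\sum_j (m - a (v j)) - n t))] *)
have chernoff : \sum_(v : {ffun 'I_n -> I} | n%:R * t <= \sum_j (m - a (v j)))
    \prod_j p (v j) <= (\sum_k F k) ^+ n * expR (- (l * (n%:R * t))).
  have -> : (\sum_k F k) ^+ n = \sum_(v : {ffun 'I_n -> I}) \prod_j F (v j).
    by rewrite -(bigA_distr_bigA (fun _ => F)) /= prodr_const card_ord.
  rewrite mulr_suml.
  apply: le_trans (_ : _ <= \sum_(v : {ffun 'I_n -> I} | n%:R * t <= \sum_j (m - a (v j)))
                         (\prod_j F (v j)) * expR (- (l * (n%:R * t)))) _.
    apply: ler_sum => v dev; rewrite /F big_split /= -expR_sum -mulrA -expRD.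
    rewrite -[leLHS]mulr1; apply: ler_wpM2l; first exact: prodr_ge0.
    by rewrite -[X in X <= _]expR0 ler_expR -mulr_sumr -mulrN -mulrDr mulr_ge0 // subr_ge0.
  rewrite [leRHS](bigID (fun v : {ffun 'I_n -> I} => n%:R * t <= \sum_j (m - a (v j)))) /= lerDl.
  apply: sumr_ge0 => v _; rewrite mulr_ge0 ?expR_ge0 // prodr_ge0 // => j _.
  by rewrite mulr_ge0 ?expR_ge0.
apply: le_trans chernoff _.
have F_ge0 : 0 <= \sum_k F k by rewrite sumr_ge0 // => k _; rewrite mulr_ge0 ?expR_ge0.
apply: le_trans (_ : _ <= expR (l ^+ 2 * C ^+ 2 / 2) ^+ n * expR (- (l * (n%:R * t)))) _.
  by rewrite ler_wpM2r ?expR_ge0 // lerXn2r ?nnegrE ?expR_ge0 // mgf_centered_le.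
rewrite -expRM_natl -expRD ler_expR le_eqVlt; apply/orP; left; apply/eqP.
by rewrite /l; field; rewrite gt_eqF.
Qed.

End finite_hoeffding.

Lemma fsbig_finType (R : realType) (I : finType) (D : set I) (f : I -> \bar R) :
  (\sum_(i \in D) f i = \sum_(i | `[< D i >]) f i)%E.
Proof.
rewrite (fsbigE [seq i <- enum I | `[< D i >]]).
- rewrite big_filter_cond big_enum_cond /=; apply: eq_bigl => i.
  by case: asboolP => //= h; rewrite mem_set.
- by rewrite filter_uniq ?enum_uniq.
- by move=> i /=; rewrite mem_filter => /andP[/asboolP].
- by move=> i Di; rewrite mem_filter mem_enum andbT; move/asboolP: Di => ->.
Qed.

Definition risk_bound_event (R : realType) (d : measure_display) (T : measurableType d)
    (P : probability T R) (loss : T -> R) (d' : measure_display) (Omega : measurableType d')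
    (n : nat) (Z : 'I_n -> Omega -> T) (Phi : Omega -> R) : set Omega :=
  [set w | (\int[P]_x (loss x)%:E <= (emp_loss loss (fun j => Z j w) + Phi w)%:E)%E].

Lemma measurable_risk_bound_event (R : realType) (d : measure_display) (T : measurableType d)
    (P : probability T R) (loss : T -> R) (d' : measure_display) (Omega : measurableType d')
    (n : nat) (Z : 'I_n -> Omega -> T) (Phi : Omega -> R) :
  measurable_fun setT loss -> (forall j, measurable_fun setT (Z j)) ->
  measurable_fun setT Phi -> measurable (risk_bound_event P loss Z Phi).
Proof.
move=> mloss mZ mPhi.
have memp : measurable_fun setT (fun w => emp_loss loss (fun j => Z j w)).
  apply: measurable_funM; first exact: measurable_cst.
  by apply: measurable_sum => j; exact: measurableT_comp mloss (mZ j).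
have := (measurable_EFinP _ _).2 (measurable_funD memp mPhi) measurableT _
  (emeasurable_itv `[(\int[P]_x (loss x)%:E)%E, +oo[%O).
rewrite setTI; congr measurable; apply/seteqP; split => w /=; rewrite in_itv /= andbT //.
Qed.

Lemma probability_ge_of_compl_le (R : realType) (d : measure_display) (T : measurableType d)
    (Q : probability T R) (A : set T) (b : R) :
  measurable A -> (Q (~` A) <= b%:E)%E -> ((1 - b)%:E <= Q A)%E.
Proof.
move=> mA; rewrite probability_setC // -[Q A]fineK ?ge0_fin_numE ?measure_ge0 //; last first.
  by apply: le_lt_trans (probability_le1 Q mA) _; rewrite ltry.
by rewrite -EFinB !lee_fin; lra.
Qed.

Section quantized_loss.
Context (R : realType) (d : measure_display) (T : measurableType d)
  (P : probability T R) (loss : T -> R) (C eps : R).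
Hypotheses (mloss : measurable_fun setT loss)
  (loss_bound : forall x, 0 <= loss x <= C) (C_gt0 : 0 < C) (eps_gt0 : 0 < eps).

(* [loss] is rounded down to the grid [eps * 'I_N.+1]: [level x] is the grid index of [loss x] *)
Let N := Num.Def.trunc (C / eps).
Let level x : 'I_N.+1 := inord (Num.Def.trunc (loss x / eps)).
Let value (k : 'I_N.+1) : R := k%:R * eps.
Let cell k : set T := [set x | level x = k].

Let level_nat x : (level x : nat) = Num.Def.trunc (loss x / eps).
Proof.
rewrite /level inordK // ltnS /N; apply: le_truncn.
by rewrite ler_pM2r ?invr_gt0 //; case/andP: (loss_bound x).
Qed.

Let value_bound k : 0 <= value k <= C.
Proof.
rewrite /value mulr_ge0 ?ler0n ?(ltW eps_gt0) //= -ler_pdivlMr //.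
apply: le_trans (_ : N%:R <= _); first by rewrite ler_nat -ltnS.
by rewrite /N truncn_le divr_ge0 ?(ltW C_gt0) ?(ltW eps_gt0).
Qed.

Let value_level_approx x : value (level x) <= loss x < value (level x) + eps.
Proof.
have loss_eps_ge0 : 0 <= loss x / eps.
  by rewrite divr_ge0 ?(ltW eps_gt0) //; case/andP: (loss_bound x).
have /andP[lo hi] := truncn_itv loss_eps_ge0; rewrite /value level_nat.
by rewrite -ler_pdivlMr // lo /= -[X in _ + X]mul1r -mulrDl natr1 -ltr_pdivrMr.
Qed.

Let measurable_cell k : measurable (cell k).
Proof.
have -> : cell k = loss @^-1` [set` `[value k, value k + eps[%R].
  apply/seteqP; split => x /=.
    by move=> <-; rewrite in_itv /= value_level_approx.
  rewrite in_itv /= => /andP[lo hi]; apply: val_inj => /=.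
  rewrite level_nat; apply/eqP; rewrite truncn_eq; last first.
    by rewrite divr_ge0 ?(ltW eps_gt0) //; case/andP: (loss_bound x).
  by rewrite ler_pdivlMr // lo /= ltr_pdivrMr // -natr1 mulrDl mul1r.
by have := mloss measurableT (measurable_itv `[value k, value k + eps[%R); rewrite setTI.
Qed.

Let prob k := fine (P (cell k)).

Let probability_cell k : P (cell k) = (prob k)%:E.
Proof.
rewrite /prob fineK // ge0_fin_numE ?measure_ge0 //.
by apply: le_lt_trans (probability_le1 P (measurable_cell k)) _; rewrite ltry.
Qed.

Let prob_ge0 k : 0 <= prob k.
Proof. by rewrite /prob fine_ge0 ?measure_ge0. Qed.

Let prob_sum1 : \sum_k prob k = 1.
Proof.
have cells_cover : \bigcup_(k in [set: 'I_N.+1]) cell k = setT.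
  by apply/seteqP; split => x // _; exists (level x).
have cells_disj : trivIset [set: 'I_N.+1] cell by move=> i j _ _ [x [/= <- <-]].
have := measure_fin_bigcup P finite_finset cells_disj (fun k _ => measurable_cell k).
rewrite cells_cover => sum_eq.
have : (1 = \sum_(k \in [set: 'I_N.+1]) P (cell k))%E by rewrite -(probability_setT P).
rewrite fsbig_finType.
rewrite (eq_bigl xpredT) => [|k]; last exact/asboolP.
by under eq_bigr do rewrite probability_cell; rewrite sumEFin => -[].
Qed.

Let mean := \sum_k prob k * value k.

Let integral_le_mean_add : (\int[P]_x (loss x)%:E <= (mean + eps)%:E)%E.
Proof.
pose g x := \sum_k (value k + eps) * \1_(cell k) x.
have gE x : g x = value (level x) + eps.
  rewrite /g (bigD1 (level x)) //= big1 ?addr0 => [|k /negPf level_neq].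
    by rewrite indicE mem_set // mulr1.
  by rewrite indicE memNset ?mulr0 //= => level_eq; rewrite level_eq eqxx in level_neq.
have mindic k : measurable_fun setT (fun x => (value k + eps) * \1_(cell k) x).
  exact/measurable_funM/measurable_indic/measurable_cell.
have value_eps_ge0 k : 0 <= value k + eps.
  by rewrite addr_ge0 ?(ltW eps_gt0) //; case/andP: (value_bound k).
apply: (@le_trans _ _ (\int[P]_x (g x)%:E)%E).
  apply: ge0_le_integral => //.
  - by move=> x _; rewrite lee_fin; case/andP: (loss_bound x).
  - exact/measurable_EFinP.
  - by apply/measurable_EFinP; apply: measurable_sum.
  - by move=> x _; rewrite lee_fin gE ltW //; case/andP: (value_level_approx x).
under eq_integral do rewrite /g -sumEFin.
rewrite ge0_integral_sum //; last 2 first.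
- by move=> k; exact/measurable_EFinP.
- by move=> k x _; rewrite lee_fin mulr_ge0 // indicE.
have integral_cell k :
    (\int[P]_x ((value k + eps) * \1_(cell k) x)%:E = ((value k + eps) * prob k)%:E)%E.
  under eq_integral do rewrite EFinM.
  rewrite ge0_integralZl_EFin //; last exact/measurable_EFinP/measurable_indic/measurable_cell.
  rewrite integral_indic //.
  by rewrite setIT EFinM; congr (_ * _)%E; exact: probability_cell.
under eq_bigr do rewrite integral_cell.
rewrite sumEFin lee_fin le_eqVlt; apply/orP; left; apply/eqP.
rewrite /mean -[in RHS](mulr1 eps) -prob_sum1 mulr_sumr -big_split /=.
by apply: eq_bigr => k _; ring.
Qed.

Section sample.
Context (d' : measure_display) (Omega : measurableType d') (Q : probability Omega R)
  (n : nat) (Z : 'I_n -> Omega -> T).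
Hypotheses (mZ : forall j, measurable_fun setT (Z j))
  (iidZ : forall A : 'I_n -> set T, (forall j, measurable (A j)) ->
     Q (\bigcap_(j in [set: 'I_n]) (Z j @^-1` A j)) = (\prod_(j < n) P (A j))%E).

Let deviation t := [set w | n%:R * t <= \sum_j (mean - value (level (Z j w)))].
Let cells (v : {ffun 'I_n -> 'I_N.+1}) := \bigcap_(j in [set: 'I_n]) (Z j @^-1` cell (v j)).

Let measurable_cells v : measurable (cells v).
Proof.
apply: fin_bigcap_measurable => [|j _]; first exact: finite_finset.
by have := mZ j measurableT (measurable_cell (v j)); rewrite setTI.
Qed.

Let deviation_bigcup t : deviation t =
  \bigcup_(v in [set v : {ffun 'I_n -> 'I_N.+1} | n%:R * t <= \sum_j (mean - value (v j))]) cells v.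
Proof.
apply/seteqP; split => [w dev_w|w [v dev_v cells_w]].
  exists [ffun j => level (Z j w)]; last by move=> j _; rewrite /= ffunE.
  by rewrite /=; under eq_bigr do rewrite ffunE.
have v_eq : v = [ffun j => level (Z j w)].
  by apply/ffunP => j; rewrite ffunE (cells_w j Logic.I).
by move: dev_v; rewrite v_eq /=; under eq_bigr do rewrite ffunE.
Qed.

Let prob_deviation_le t : (0 < n)%N -> 0 <= t ->
  (Q (deviation t) <= (expR (- (n%:R * t ^+ 2 / (2 * C ^+ 2))))%:E)%E.
Proof.
move=> n_gt0 t_ge0; rewrite deviation_bigcup measure_fin_bigcup //; last 2 first.
- exact: finite_finset.
- move=> v v' _ _ [w [cells_w cells'_w]]; apply/ffunP => j.
  by rewrite -(cells_w j Logic.I) -(cells'_w j Logic.I).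
rewrite fsbig_finType (eq_bigl _ _ (fun v => asboolb _)).
have Q_cells v : Q (cells v) = (\prod_j prob (v j))%:E.
  rewrite /cells iidZ => [|j]; last exact: measurable_cell.
  by rewrite -prodEFin; apply: eq_bigr => j _; rewrite probability_cell.
rewrite (eq_bigr (fun v : {ffun 'I_n -> 'I_N.+1} => (\prod_j prob (v j))%:E)) => [|v _];
  last exact: Q_cells.
rewrite sumEFin lee_fin.
exact: (hoeffding_lower_tail prob_ge0 prob_sum1 value_bound (n := n) (t := t) n_gt0 C_gt0 t_ge0).
Qed.

Lemma risk_bound_event_whp (t : R) (Phi : Omega -> R) :
  (0 < n)%N -> 0 <= t -> measurable_fun setT Phi -> (forall w, eps + t <= Phi w) ->
  ((1 - expR (- (n%:R * t ^+ 2 / (2 * C ^+ 2))))%:E <= Q (risk_bound_event P loss Z Phi))%E.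
Proof.
move=> n_gt0 t_ge0 mPhi Phi_ge.
apply: probability_ge_of_compl_le; first exact: measurable_risk_bound_event.
apply: le_trans (prob_deviation_le n_gt0 t_ge0).
apply: le_measure; rewrite ?inE; first exact/measurableC/measurable_risk_bound_event.
  by rewrite deviation_bigcup; apply: fin_bigcup_measurable => // v _; apply: measurable_cells.
move=> w /= /negP; rewrite -ltNge => risk_gt.
have n_gt0R : (0 : R) < n%:R by rewrite ltr0n.
have mean_gt : emp_loss loss (fun j => Z j w) + t < mean.
  have := lt_le_trans risk_gt integral_le_mean_add; rewrite lte_fin.
  by have := Phi_ge w; lra.
rewrite /deviation /=.
have -> : \sum_j (mean - value (level (Z j w))) =
    n%:R * (mean - emp_loss loss (fun j => Z j w))
    + \sum_j (loss (Z j w) - value (level (Z j w))).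
  by rewrite /emp_loss !sumrB sumr_const card_ord -mulr_natl; field; rewrite gt_eqF.
rewrite -[leLHS]addr0 lerD //; first by rewrite ler_pM2l //; lra.
apply: sumr_ge0 => j _; rewrite subr_ge0.
by case/andP: (value_level_approx (Z j w)).
Qed.

End sample.
End quantized_loss.

Lemma probability_inhabited (R : realType) (d : measure_display) (T : measurableType d)
    (P : probability T R) : [set: T] !=set0.
Proof.
apply/set0P/eqP => T_empty; have := probability_setT P.
by rewrite T_empty measure0 => /esym/eqP; rewrite onee_eq0.
Qed.

Lemma risk_bound_event_sure (R : realType) (d : measure_display) (T : measurableType d)
    (P : probability T R) (loss : T -> R) (C : R) (d' : measure_display)
    (Omega : measurableType d') (Q : probability Omega R) (n : nat)
    (Z : 'I_n -> Omega -> T) (Phi : Omega -> R) :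
  measurable_fun setT loss -> (forall x, 0 <= loss x <= C) -> (forall w, C <= Phi w) ->
  Q (risk_bound_event P loss Z Phi) = 1%E.
Proof.
move=> mloss loss_bound Phi_ge.
have integral_le : (\int[P]_x (loss x)%:E <= C%:E)%E.
  apply: le_trans (_ : _ <= \int[P]_x (cst C%:E) x)%E _.
    apply: ge0_le_integral => //.
    - by move=> x _; rewrite lee_fin; case/andP: (loss_bound x).
    - exact/measurable_EFinP.
    - by move=> x _; rewrite lee_fin; case/andP: (loss_bound x).
  rewrite integral_cst // [X in (_ * X <= _)%E](_ : _ = 1%E) ?mule1 //.
  exact: probability_setT.
suff -> : risk_bound_event P loss Z Phi = setT by exact: probability_setT.
apply/seteqP; split => // w _; apply: le_trans integral_le _.
rewrite lee_fin -[C]add0r lerD // /emp_loss mulr_ge0 ?invr_ge0 // sumr_ge0 // => j _.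
by case/andP: (loss_bound (Z j w)).
Qed.

Lemma measurable_fun_finite_factor (R : realType) (d : measure_display)
    (Omega : measurableType d) (I : finType) (key : Omega -> I) (f : Omega -> R) :
  (forall k, measurable (key @^-1` [set k])) ->
  (forall w w', key w = key w' -> f w = f w') ->
  measurable_fun setT f.
Proof.
move=> mkey f_key _ Y mY; rewrite setTI.
have -> : f @^-1` Y = \bigcup_(k in [set k | exists w, key w = k /\ Y (f w)]) key @^-1` [set k].
  apply/seteqP; split => [w Yw|w [k [w' [<- Yw'] /= kw]]]; first by exists (key w) => //; exists w.
  by rewrite (f_key w w').
by apply: fin_bigcup_measurable => [|k _]; [exact: finite_finset | exact: mkey].
Qed.

Section membership_pattern.
Context (d : measure_display) (T : measurableType d) (d' : measure_display)
  (Omega : measurableType d') (n K : nat) (Z : 'I_n -> Omega -> T) (Zs : 'I_K -> set T).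
Hypotheses (mZ : forall j, measurable_fun setT (Z j)) (mZs : forall i, measurable (Zs i)).

Let pattern w : {ffun 'I_n -> {ffun 'I_K -> bool}} := [ffun j => [ffun i => Z j w \in Zs i]].

Let measurable_pattern_fiber k : measurable (pattern @^-1` [set k]).
Proof.
pose S j i := if k j i then Z j @^-1` Zs i else ~` (Z j @^-1` Zs i).
have -> : pattern @^-1` [set k] = \bigcap_(j in [set: 'I_n]) \bigcap_(i in [set: 'I_K]) S j i.
  apply/seteqP; split => w /=.
    move=> pattern_w j _ i _; rewrite /S -pattern_w !ffunE.
    by case: (boolP (Z j w \in Zs i)) => /= [/set_mem|/negP Zji /mem_set].
  move=> Sw; apply/ffunP => j; apply/ffunP => i; rewrite !ffunE.
  have := Sw j Logic.I i Logic.I; rewrite /S.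
  by case: (k j i) => /= Zji; [exact: mem_set | apply/negP => /set_mem].
apply: fin_bigcap_measurable => [|j _]; first exact: finite_finset.
apply: fin_bigcap_measurable => [|i _]; first exact: finite_finset.
have mZji : measurable (Z j @^-1` Zs i) by have := mZ j measurableT (mZs i); rewrite setTI.
by rewrite /S; case: (k j i) => //; exact: measurableC.
Qed.

Lemma measurable_fun_membership (R : realType) (F : ('I_n -> T) -> R) :
  (forall z z', (forall j i, (z j \in Zs i) = (z' j \in Zs i)) -> F z = F z') ->
  measurable_fun setT (fun w => F (fun j => Z j w)).
Proof.
move=> F_pattern; apply: (measurable_fun_finite_factor measurable_pattern_fiber).
move=> w w' pattern_eq; apply: F_pattern => j i.
have := congr1 (fun k : {ffun 'I_n -> {ffun 'I_K -> bool}} => k j i) pattern_eq.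
by rewrite /= !ffunE.
Qed.

End membership_pattern.

Section partition_counts.
Context (d : measure_display) (T : measurableType d) (n K : nat) (Zs : 'I_K -> set T).

Lemma cell_count_membership (z z' : 'I_n -> T) :
  (forall j i, (z j \in Zs i) = (z' j \in Zs i)) -> cell_count Zs z = cell_count Zs z'.
Proof.
move=> same_membership; apply: funext => i; rewrite /cell_count.
suff -> : [set j : 'I_n | z j \in Zs i] = [set j | z' j \in Zs i] by [].
by apply/seteqP; split => j /=; rewrite same_membership.
Qed.

Lemma num_hit_gt0 (z : 'I_n -> T) :
  (0 < n)%N -> \bigcup_(i in [set: 'I_K]) Zs i = setT -> (0 < num_hit Zs z)%N.
Proof.
move=> n_gt0 cover; have : [set: T] (z (Ordinal n_gt0)) by [].
rewrite -cover => -[i _ Zi]; apply/card_gt0P; exists i; apply: mem_set.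
by apply/card_gt0P; exists (Ordinal n_gt0); apply: mem_set; exact: mem_set.
Qed.

End partition_counts.

Section bound_terms.
Variables (R : realType) (n K : nat).

Definition uhat_lb (delta : R) : R :=
  1 / (2 * n%:R) + Num.sqrt (2 / n%:R * ln (2 * K%:R / delta)).

(* the second term of [gfun] at [t = 1] *)
Definition gfun_lb (C delta : R) : R := 2 * C * ln (2 * K%:R / delta) / n%:R.

Definition penalty (d : measure_display) (T : measurableType d) (Zs : 'I_K -> set T)
    (C gamma delta alpha : R) (z : 'I_n -> T) : R :=
  C * Num.sqrt (uhat gamma delta Zs z * alpha * ln gamma) + gfun C n K (num_hit Zs z) (delta / 2).

Lemma uhat_ge (d : measure_display) (T : measurableType d) (Zs : 'I_K -> set T)
    (gamma delta : R) (z : 'I_n -> T) :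
  1 <= gamma -> uhat_lb delta <= uhat gamma delta Zs z.
Proof.
move=> gamma_ge1; have gamma2_ge1 : 1 <= gamma ^+ 2 by rewrite expr_ge1 // (le_trans ler01).
rewrite /uhat /uhat_lb -addrA lerD //.
  by rewrite ler_wpM2r ?invr_ge0 ?mulr_ge0 ?ler0n.
rewrite -[leLHS]add0r lerD //.
  by rewrite mulr_ge0 ?divr_ge0 ?sqr_ge0 ?sumr_ge0 // => i _; rewrite sqr_ge0.
by rewrite -[leLHS]mul1r ler_wpM2r ?sqrtr_ge0.
Qed.

Lemma gfun_ge (C delta : R) (t : nat) :
  0 <= C -> 0 <= ln (2 * K%:R / delta) -> (0 < t)%N -> gfun_lb C delta <= gfun C n K t delta.
Proof.
move=> C_ge0 L_ge0 t_gt0; rewrite /gfun /gfun_lb -[leLHS]add0r lerD //.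
  by rewrite !mulr_ge0 ?addr_ge0 ?sqrtr_ge0.
apply: ler_wpM2r; first by rewrite invr_ge0.
have : 0 <= C * ln (2 * K%:R / delta) * (t%:R - 1) by rewrite !mulr_ge0 // subr_ge0 ler1n.
nra.
Qed.

Lemma measurable_penalty (d : measure_display) (T : measurableType d)
    (d' : measure_display) (Omega : measurableType d') (Z : 'I_n -> Omega -> T)
    (Zs : 'I_K -> set T) (C gamma delta alpha : R) :
  (forall j, measurable_fun setT (Z j)) -> (forall i, measurable (Zs i)) ->
  measurable_fun setT (fun w => penalty Zs C gamma delta alpha (fun j => Z j w)).
Proof.
move=> mZ mZs; apply: measurable_fun_membership => // z z' same.
by rewrite /penalty /uhat /num_hit (cell_count_membership same).
Qed.

Variable delta : R.
Hypotheses (K_gt0 : (0 < K)%N) (delta_gt0 : 0 < delta) (delta_le1 : delta <= 1).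

Let ln_2K_div_ge (k : nat) (x : R) : 0 < x -> 2 ^+ k * x <= 2 ->
  k%:R / 2 <= ln (2 * K%:R / x).
Proof.
move=> x_gt0 x_le; apply: ln_ge_halfn; rewrite ler_pdivlMr //.
have K_ge1 : 1 <= K%:R :> R by rewrite ler1n.
lra.
Qed.

Let L_ge : 1 / 2 <= ln (2 * K%:R / delta).
Proof. by apply: (ln_2K_div_ge (k := 1)) => //; rewrite expr1; move: delta_le1; lra. Qed.

Let L'_ge : 1 <= ln (2 * K%:R / (delta / 2)).
Proof.
apply: le_trans (ln_2K_div_ge (k := 2) _ _); first by rewrite divff.
  by rewrite divr_gt0.
by rewrite expr2; move: delta_le1; lra.
Qed.

Lemma penalty_ge (d : measure_display) (T : measurableType d) (Zs : 'I_K -> set T)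
    (C gamma alpha : R) (z : 'I_n -> T) :
  (0 < n)%N -> \bigcup_(i in [set: 'I_K]) Zs i = setT ->
  0 <= C -> 1 <= gamma -> 0 <= alpha ->
  gfun_lb C (delta / 2) + C * Num.sqrt (uhat_lb delta * alpha * ln gamma)
  <= penalty Zs C gamma delta alpha z.
Proof.
move=> n_gt0 cover C_ge0 gamma_ge1 alpha_ge0.
rewrite addrC lerD ?gfun_ge ?num_hit_gt0 //; last by apply: le_trans L'_ge.
by rewrite ler_wpM2l // ler_wsqrtr // !ler_wpM2r ?ln_ge0 ?uhat_ge.
Qed.

Lemma gfun_lb_lt (C : R) : (0 < n)%N -> 0 <= C -> gfun_lb C (delta / 2) < C ->
  [/\ 0 < C, 0 < gfun_lb C (delta / 2) & (3 <= n)%N].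
Proof.
move=> n_gt0 C_ge0 lt_C; have n_gt0R : (0 : R) < n%:R by rewrite ltr0n.
have C_gt0 : 0 < C.
  rewrite lt_neqAle C_ge0 andbT; apply: contraTneq lt_C => <-.
  by rewrite /gfun_lb mulr0 !mul0r ltxx.
split => //; first by rewrite /gfun_lb !mulr_gt0 ?invr_gt0 //; apply: lt_le_trans L'_ge.
by rewrite -(ltr_nat R); move: lt_C; rewrite /gfun_lb ltr_pdivrMr //; have := L'_ge; nra.
Qed.

Lemma hoeffding_rate_ge2 : (3 <= n)%N -> 2 <= n%:R * uhat_lb delta.
Proof.
move=> n_ge3; have L_ge_half := L_ge; set L := ln (2 * K%:R / delta) in L_ge_half *.
have n_ge3R : (3 : R) <= n%:R by rewrite (ler_nat R 3 n).
have sqrt_ge : 3 / (2 * n%:R) <= Num.sqrt (2 / n%:R * L).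
  rewrite -[leLHS]ger0_norm ?divr_ge0 // -sqrtr_sqr ler_sqrt ?mulr_ge0 ?divr_ge0 //; last lra.
  have -> : 2 / n%:R * L = (3 / (2 * n%:R)) ^+ 2 + (8 * L * n%:R - 9) / (4 * n%:R ^+ 2).
    by field; rewrite gt_eqF //; lra.
  by rewrite lerDl divr_ge0 ?mulr_ge0 ?sqr_ge0 //; nra.
have := ler_wpM2l (ler0n R n) sqrt_ge; rewrite /uhat_lb -/L mulrDr.
have -> : n%:R * (3 / (2 * n%:R)) = 3 / 2 :> R by field; rewrite gt_eqF //; lra.
have -> : n%:R * (1 / (2 * n%:R)) = 1 / 2 :> R by field; rewrite gt_eqF //; lra.
lra.
Qed.

End bound_terms.

Lemma hoeffding_rate_le (R : realType) (n : nat) (C u alpha gamma : R) :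
  0 < C -> 0 <= alpha -> 1 <= gamma -> 2 <= n%:R * u ->
  expR (- (n%:R * (C * Num.sqrt (u * alpha * ln gamma)) ^+ 2 / (2 * C ^+ 2)))
  <= gamma `^ (- alpha).
Proof.
move=> C_gt0 alpha_ge0 gamma_ge1 nu_ge2.
have s_ge0 : 0 <= alpha * ln gamma by rewrite mulr_ge0 ?ln_ge0.
have u_ge0 : 0 <= u by have := ler0n R n; nra.
rewrite /powR gt_eqF ?(lt_le_trans ltr01) // ler_expR mulNr lerN2.
rewrite exprMn sqr_sqrtr; last by rewrite -mulrA mulr_ge0.
have -> : n%:R * (C ^+ 2 * (u * alpha * ln gamma)) / (2 * C ^+ 2) =
          n%:R * u * (alpha * ln gamma) / 2 by field; rewrite gt_eqF.
rewrite ler_pdivlMr //; nra.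
Qed.

Theorem theorem1 (R : realType) (d : measure_display) (T : measurableType d)
  (P : probability T R)
  (loss : T -> R) (C : R)
  (d' : measure_display) (Omega : measurableType d') (Q : probability Omega R)
  (n K : nat) (Z : 'I_n -> Omega -> T) (Zs : 'I_K -> set T)
  (gamma delta alpha : R) :
  measurable_fun setT loss ->
  (forall z, 0 <= loss z) ->
  has_ubound (range loss) ->
  C = sup (range loss) ->
  (0 < n)%N ->
  (forall j, measurable_fun setT (Z j)) ->
  (* z_1, ..., z_n are i.i.d. with law P *)
  (forall A : 'I_n -> set T, (forall j, measurable (A j)) ->
     Q (\bigcap_(j in [set: 'I_n]) (Z j @^-1` A j)) = (\prod_(j < n) P (A j))%E) ->
  (* Gamma = (Z_1, ..., Z_K) is a partition of the instance set into
     disjoint nonempty measurable sets *)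
  (forall i, measurable (Zs i)) ->
  (forall i, Zs i !=set0) ->
  (forall i j, i != j -> Zs i `&` Zs j = set0) ->
  \bigcup_(i in [set: 'I_K]) Zs i = setT ->
  1 <= gamma -> 0 < delta ->
  0 <= alpha ->
  alpha <= gamma * n%:R * (K%:R + gamma * n%:R) / (K%:R * (4 * n%:R - 3)) ->
  ((1 - gamma `^ (- alpha) - delta)%:E <=
   Q [set w | (\int[P]_z (loss z)%:E <=
      (emp_loss loss (fun j => Z j w)
       + C * Num.sqrt (uhat gamma delta Zs (fun j => Z j w) * alpha * ln gamma)
       + gfun C n K (num_hit Zs (fun j => Z j w)) (delta / 2))%:E)%E])%E.
Proof.
move=> mloss loss_ge0 loss_ub C_sup n_gt0 mZ iidZ mZs _ _ cover gamma_ge1 delta_gt0 alpha_ge0 _.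
have loss_bound x : 0 <= loss x <= C by rewrite loss_ge0 C_sup (ub_le_sup loss_ub) //; exists x.
have [x0 _] := probability_inhabited P.
have C_ge0 : 0 <= C by case/andP: (loss_bound x0) => /le_trans; apply.
have [delta_ge1|delta_lt1] := leP 1 delta.
  by apply: le_trans (measure_ge0 _ _); rewrite lee_fin; have := powR_ge0 gamma (- alpha); lra.
have K_gt0 : (0 < K)%N.
  by have : [set: T] x0 by []; rewrite -cover => -[[i i_lt] _ _]; apply: leq_ltn_trans i_lt.
pose eps := gfun_lb n K C (delta / 2).
pose t := C * Num.sqrt (uhat_lb n K delta * alpha * ln gamma).
pose Phi w := penalty Zs C gamma delta alpha (fun j => Z j w).
have Phi_ge w : eps + t <= Phi w by apply: penalty_ge => //; exact: ltW.
have t_ge0 : 0 <= t by rewrite mulr_ge0 ?sqrtr_ge0.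
set G := (X in (_ <= Q X)%E).
have -> : G = risk_bound_event P loss Z Phi.
  by rewrite /G /risk_bound_event; apply: eq_set => w; rewrite -addrA.
have [C_le_eps|eps_lt_C] := leP C eps.
  rewrite (risk_bound_event_sure P Q Z mloss loss_bound) => [|w]; last first.
    by apply: le_trans C_le_eps _; have := Phi_ge w; lra.
  by rewrite lee_fin; have := powR_ge0 gamma (- alpha); lra.
have delta_le1 := ltW delta_lt1.
have [C_gt0 eps_gt0 n_ge3] := gfun_lb_lt K_gt0 delta_gt0 delta_le1 n_gt0 C_ge0 eps_lt_C.
have mPhi : measurable_fun setT Phi by exact: measurable_penalty.
apply: le_trans (risk_bound_event_whp mloss loss_bound C_gt0 eps_gt0 mZ iidZ n_gt0 t_ge0 mPhi
  Phi_ge).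
have := hoeffding_rate_ge2 K_gt0 delta_gt0 delta_le1 n_ge3.
move/(hoeffding_rate_le C_gt0 alpha_ge0 gamma_ge1).
by rewrite lee_fin; lra.
Qed.
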